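(* For any constant $\epsilon\in(0,1)$, every deterministic $O(1)$-approximation algorithm for the $1$-region problem must make at least $(1-\epsilon)\log\log n$ adaptive queries to the sorted input list $X[1,n]$ (in the worst case), for all sufficiently large $n$.
   Context: Logarithms are base $2$. The input is a list $X[1,n]$ whose entries are in $\{0,1\}$, sorted in nondecreasing order; the algorithm accesses it only by adaptive queries, each revealing one entry. For $d>1$, a $d$-approximate $1$-region is an interval $R=[s,n]$ such that at least $\frac{|R|}{d}$ numbers in $X[s,n]$ equal $1$ and $[s,n]$ contains all positions $j$ with $X[j]=1$; an $O(1)$-approximation algorithm outputs a $d$-approximate $1$-region for some constant $d>1$ independent of $n$. *)

From Stdlib Require Import Reals.
From mathcomp Require Import all_boot.

Definition log2 (x : R) : R := Rdiv (ln x) (ln (INR 2)).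

(* A deterministic adaptive query algorithm = a (binary) decision tree.
   [Query i t0 t1] reads entry X[i] (1-indexed) and continues with t0 if
   it is 0, t1 if it is 1; [Leaf s] outputs the region [s, n]. *)
Inductive dtree : Type :=
| Leaf : nat -> dtree
| Query : nat -> dtree -> dtree -> dtree.

(* Input X[1,n] is a list of size n; X[j] = nth false X (j-1).
   (Out-of-range queries return a fixed 0 and carry no information.) *)
Definition entry (X : seq bool) (j : nat) : bool := nth false X j.-1.

Definition valid_input (n : nat) (X : seq bool) : Prop :=
  size X = n /\ sorted (fun a b : bool => a ==> b) X.

Fixpoint output (T : dtree) (X : seq bool) : nat :=
  match T with
  | Leaf s => s
  | Query i t0 t1 => if entry X i then output t1 X else output t0 X
  end.

Fixpoint nqueries (T : dtree) (X : seq bool) : nat :=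
  match T with
  | Leaf _ => 0
  | Query i t0 t1 => (if entry X i then nqueries t1 X else nqueries t0 X).+1
  end.

Definition ones_in (X : seq bool) (s n : nat) : nat :=
  count (entry X) (iota s (n.+1 - s)).

(* R = [s, n] (with s = n+1 meaning the empty interval) is a
   d-approximate 1-region: at least |R|/d entries of X[s,n] equal 1, and
   R contains every position j with X[j] = 1. *)
Definition approx_region (d : R) (n : nat) (X : seq bool) (s : nat) : Prop :=
  (1 <= s <= n.+1)%N /\
  Rle (Rdiv (INR (n.+1 - s)) d) (INR (ones_in X s n)) /\
  (forall j : nat, (1 <= j <= n)%N -> entry X j -> (s <= j)%N).

Definition solves (d : R) (n : nat) (T : dtree) : Prop :=
  forall X, valid_input n X -> approx_region d n X (output T X).

From Stdlib Require Import Reals Lra.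
From mathcomp Require Import all_boot zify.

(* Fix an integer D > d.  On the input with exactly m ones, a d-approximate
   1-region has length between m and d m; hence the inputs with D^j ones,
   0 <= j <= log_D n, must all receive different answers.  A decision tree in
   which every one of these inputs makes at most q queries has at most 2^q
   possible answers, so some input needs q with 2^q > log_D n, that is
   q >= log log n - log log D, which exceeds (1 - eps) log log n once n is
   large. *)

Lemma size_undup_output_leq (T : dtree) (q : nat) (S : seq (seq bool)) :
  (forall X, X \in S -> (nqueries T X <= q)%N) ->
  (size (undup (map (output T) S)) <= 2 ^ q)%N.
Proof.
elim: T q S => [s|i t0 IH0 t1 IH1] q S depthS.
  apply: (@leq_trans (size [:: s])); last by rewrite expn_gt0.
  apply: uniq_leq_size; first exact: undup_uniq.
  by move=> y; rewrite mem_undup => /mapP [X _ ->]; rewrite inE.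
case: q depthS => [|q] depthS.
  by case: S depthS => [|X S] // depthS; have := depthS X (mem_head _ _).
pose S0 := [seq X <- S | ~~ entry X i]; pose S1 := [seq X <- S | entry X i].
have le0 : (size (undup (map (output t0) S0)) <= 2 ^ q)%N.
  apply: IH0 => X; rewrite mem_filter => /andP [/negbTE X0 XS].
  by have := depthS X XS; rewrite /= X0.
have le1 : (size (undup (map (output t1) S1)) <= 2 ^ q)%N.
  apply: IH1 => X; rewrite mem_filter => /andP [X1 XS].
  by have := depthS X XS; rewrite /= X1.
rewrite expnS mul2n -addnn; apply: leq_trans (leq_add le0 le1).
rewrite -size_cat; apply: uniq_leq_size; first exact: undup_uniq.
move=> y; rewrite mem_undup => /mapP [X XS ->] /=.
rewrite mem_cat !mem_undup; case Xi: (entry X i).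
  by apply/orP; right; apply/mapP; exists X; rewrite // mem_filter Xi.
by apply/orP; left; apply/mapP; exists X; rewrite // mem_filter Xi.
Qed.

Definition suffix_input (n m : nat) : seq bool := mkseq (fun i => n - m <= i)%N n.

Lemma entry_suffix_input n m j : (1 <= j <= n)%N ->
  entry (suffix_input n m) j = (n - m < j)%N.
Proof. by case: j => [|j] // /andP [_ jn]; rewrite /entry nth_mkseq. Qed.

Lemma valid_suffix_input n m : valid_input n (suffix_input n m).
Proof.
split; first by rewrite size_mkseq.
apply: (homo_sorted _ _ (iota_sorted 0 n)) => i j ij.
by apply/implyP => /leq_trans; apply.
Qed.

Lemma ones_in_suffix_input n m s : (1 <= s)%N ->
  (ones_in (suffix_input n m) s n <= m)%N.
Proof.
move=> s1; rewrite /ones_in -size_filter.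
apply: (@leq_trans (size (iota (n - m).+1 m))); last by rewrite size_iota.
apply: uniq_leq_size; first by rewrite filter_uniq // iota_uniq.
move=> j; rewrite mem_filter !mem_iota => /andP [+ /andP [sj jn]].
by rewrite entry_suffix_input; lia.
Qed.

Lemma approx_region_suffix_ge {d n m s} : (0 < m)%N -> (m <= n)%N ->
  approx_region d n (suffix_input n m) s -> (m <= n.+1 - s)%N.
Proof.
move=> m_gt0 m_le [_ [_ containsP]].
have : (s <= (n - m).+1)%N.
  by apply: containsP; rewrite ?entry_suffix_input; lia.
lia.
Qed.

Lemma approx_region_suffix_le {d n m s} : Rlt 0 d ->
  approx_region d n (suffix_input n m) s -> Rle (INR (n.+1 - s)) (Rmult d (INR m)).
Proof.
move=> d_gt0 [/andP [s1 _] [dense _]].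
have /leP/le_INR ones_le := @ones_in_suffix_input n m s s1.
have := Rmult_le_compat_l d _ _ (Rlt_le _ _ d_gt0) (Rle_trans _ _ _ dense ones_le).
by have -> : Rmult d (Rdiv (INR (n.+1 - s)) d) = INR (n.+1 - s) by field; lra.
Qed.

Lemma output_suffix_input_neq {d n T m m'} : Rlt 0 d -> solves d n T ->
  (m' <= n)%N -> Rlt (Rmult d (INR m)) (INR m') ->
  output T (suffix_input n m) != output T (suffix_input n m').
Proof.
move=> d_gt0 sol m'n dm_lt; apply/eqP => same.
have m'_gt0 : (0 < m')%N.
  by apply/ltP/INR_lt; have := Rmult_le_pos _ _ (Rlt_le _ _ d_gt0) (pos_INR m); simpl; lra.
have /leP/le_INR := approx_region_suffix_ge m'_gt0 m'n (sol _ (valid_suffix_input n m')).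
have := approx_region_suffix_le d_gt0 (sol _ (valid_suffix_input n m)).
rewrite same; lra.
Qed.

Lemma INR_expn (m k : nat) : INR (m ^ k) = pow (INR m) k.
Proof. by elim: k => [|k IHk]; rewrite ?expn0 // expnS mult_INR IHk. Qed.

Lemma exists_input_queries_ge {d D n T} : (1 < D)%N -> Rlt 0 d -> Rlt d (INR D) ->
  (0 < n)%N -> solves d n T ->
  exists X, valid_input n X /\ (n < D ^ 2 ^ nqueries T X)%N.
Proof.
move=> D_gt1 d_gt0 dD n_gt0 sol.
pose K := trunc_log D n.
pose X (j : 'I_K.+1) := suffix_input n (D ^ j).
have separated (i j : 'I_K.+1) : (i < j)%N -> output T (X i) != output T (X j).
  move=> ij; apply: (output_suffix_input_neq d_gt0 sol).
    apply: leq_trans _ (trunc_logP D_gt1 n_gt0).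
    by rewrite leq_exp2l // -ltnS.
  have Di_gt0 : Rlt 0 (INR (D ^ i)) by apply/lt_0_INR/ltP; rewrite expn_gt0 ltnW.
  apply: Rlt_le_trans (Rmult_lt_compat_r _ _ _ Di_gt0 dD) _.
  rewrite [Rmult _ _](_ : _ = INR (D ^ i.+1)); last by rewrite expnS mult_INR.
  by apply/le_INR/leP; rewrite leq_exp2l.
have [j _ j_max] := @arg_maxnP _ ord0 predT (fun j => nqueries T (X j)) isT.
exists (X j); split; first exact: valid_suffix_input.
have outputs_uniq : uniq (map (output T) (map X (enum 'I_K.+1))).
  rewrite -map_comp map_inj_uniq ?enum_uniq // => i i' /= same.
  case: (ltngtP i i') => [lt | gt | /val_inj //].
    by have := separated i i' lt; rewrite same eqxx.
  by have := separated i' i gt; rewrite same eqxx.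
have := @size_undup_output_leq T (nqueries T (X j)) (map X (enum 'I_K.+1)).
rewrite undup_id // !size_map -enumT size_enum_ord => K_le.
apply: (leq_trans (trunc_log_ltn n D_gt1)); rewrite leq_exp2l // K_le //.
by move=> _ /mapP [i _ ->]; apply: j_max.
Qed.

Local Open Scope R_scope.

Lemma ln2_gt0 : 0 < ln (INR 2).
Proof. by rewrite -ln_1; apply: ln_increasing => /=; lra. Qed.

Lemma log2_increasing x y : 0 < x -> x < y -> log2 x < log2 y.
Proof.
move=> x_gt0 xy; apply: Rmult_lt_compat_r; last exact: ln_increasing.
exact/Rinv_0_lt_compat/ln2_gt0.
Qed.

Lemma log2_le x y : 0 < x -> x <= y -> log2 x <= log2 y.
Proof. by move=> x_gt0 [xy | <-]; [apply/Rlt_le/log2_increasing | right]. Qed.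

Lemma log2_mult x y : 0 < x -> 0 < y -> log2 (x * y) = log2 x + log2 y.
Proof. by move=> x_gt0 y_gt0; rewrite /log2 ln_mult //; field; have := ln2_gt0; lra. Qed.

Lemma log2_pow x k : 0 < x -> log2 (x ^ k) = INR k * log2 x.
Proof. by move=> x_gt0; rewrite /log2 ln_pow //; field; have := ln2_gt0; lra. Qed.

Lemma log2_INR_exp2 k : log2 (INR (2 ^ k)) = INR k.
Proof.
rewrite INR_expn log2_pow /log2; last by rewrite /=; lra.
by field; have := ln2_gt0; lra.
Qed.

Lemma log2_gt0 x : 1 < x -> 0 < log2 x.
Proof.
move=> x_gt1; apply: Rmult_lt_0_compat; last exact/Rinv_0_lt_compat/ln2_gt0.
by rewrite -ln_1; apply: ln_increasing; lra.
Qed.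

Lemma log2_log2_lt {D n Q} : (1 < D)%N -> (1 < n)%N -> (n < D ^ 2 ^ Q)%N ->
  log2 (log2 (INR n)) < INR Q + log2 (log2 (INR D)).
Proof.
move=> D_gt1 n_gt1 /ltP/lt_INR n_lt.
have /lt_INR D_gt1R := ltP D_gt1; have /lt_INR n_gt1R := ltP n_gt1.
rewrite -(log2_INR_exp2 Q) -log2_mult; last exact: log2_gt0.
  apply: log2_increasing; first exact: log2_gt0.
  rewrite -log2_pow; last by simpl in *; lra.
  by rewrite -INR_expn; apply: log2_increasing => //; simpl in *; lra.
by apply/lt_0_INR/ltP; rewrite expn_gt0.
Qed.

Lemma log2_log2_ge {M n} : (2 ^ 2 ^ M <= n)%N -> INR M <= log2 (log2 (INR n)).
Proof.
move=> /leP/le_INR Nn.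
have N_gt0 k : 0 < INR (2 ^ k) by apply/lt_0_INR/ltP; rewrite expn_gt0.
rewrite -log2_INR_exp2; apply: log2_le => //.
by rewrite -log2_INR_exp2; apply: log2_le.
Qed.

Local Close Scope R_scope.

Theorem corollary1 (eps d : R) :
  Rlt (INR 0) eps -> Rlt eps (INR 1) -> Rlt (INR 1) d ->
  exists N : nat, forall n : nat, (N <= n)%N ->
    forall T : dtree, solves d n T ->
      exists X : seq bool, valid_input n X /\
        Rle (Rmult (Rminus (INR 1) eps) (log2 (log2 (INR n))))
            (INR (nqueries T X)).
Proof.
rewrite /= => eps_gt0 _ d_gt1.
have d_gt0 : Rlt 0 d by lra.
have [D0 dD0] := INR_unbounded d.
pose D := D0.+2.
have D_gt1 : (1 < D)%N by [].
have dD : Rlt d (INR D) by rewrite /D !S_INR; lra.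
pose c := log2 (log2 (INR D)).
have [M cM] := INR_unbounded (Rdiv c eps).
exists (2 ^ 2 ^ M)%N => n Nn T sol.
have n_gt1 : (1 < n)%N.
  by apply: leq_trans Nn; rewrite -[X in (X < _)%N](expn0 2) ltn_exp2l // expn_gt0.
have [X [X_valid X_queries]] :=
  exists_input_queries_ge D_gt1 d_gt0 dD (ltnW n_gt1) sol.
exists X; split => //.
have upper := log2_log2_lt D_gt1 n_gt1 X_queries; rewrite -/c in upper.
have lower := Rmult_le_compat_l _ _ _ (Rlt_le _ _ eps_gt0) (log2_log2_ge Nn).
have c_lt : Rlt c (Rmult eps (INR M)).
  by have := Rmult_lt_compat_l _ _ _ eps_gt0 cM; rewrite /Rdiv Rmult_comm Rmult_assoc Rinv_l; lra.
lra.
Qed.
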